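(* Let $t\ge 2$, let $n_1,\dots,n_t$ be positive integers, and let $G=K_{n_1,\dots,n_t}$ be the complete $t$-partite graph with partite sets $V_1,\dots,V_t$, $|V_i|=n_i$. Let $N_t=\{1,\dots,t\}$ and $f(I)=\sum_{i\in I}n_i$ for $I\subseteq N_t$. Let $p$ be a positive integer with $f(N_t)>p$. Then for every optimal $\gamma_p(G)$-set $D$ and all $i,j\in N_t\setminus I_D$, we have $\big||D_i|-|D_j|\big|\le 1$.
   Context: A set $S\subseteq V(G)$ is a $p$-dominating set of $G$ if every vertex $v\in V(G)\setminus S$ has at least $p$ neighbors in $S$. The $p$-domination number $\gamma_p(G)$ is the minimum cardinality of a $p$-dominating set of $G$, and a $\gamma_p(G)$-set is a $p$-dominating set of cardinality $\gamma_p(G)$. For $D\subseteq V(G)$ write $D_i=V_i\cap D$ for $i\in N_t$ and $I_D=\{i\in N_t: |D_i|=|V_i|\}$. For a $\gamma_p(G)$-set $D$ with $|I_D|<t$ define $$\mu(D)=\sum_{i\in N_t\setminus I_D}\left|\,|D_i|-\frac{|D|-f(I_D)}{t-|I_D|}\right|.$$ A $\gamma_p(G)$-set $D$ is optimal if: (1) $f(I_D)<p$; (2) $|I_D|\ge |I_S|$ for every $\gamma_p(G)$-set $S$; (3) $\mu(D)\le\mu(S)$ for every $\gamma_p(G)$-set $S$ with $I_S=I_D$. *)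

From mathcomp Require Import all_boot all_order all_algebra.
Set Implicit Arguments. Unset Strict Implicit. Unset Printing Implicit Defensive.
Import Order.TTheory GRing.Theory Num.Theory.

(* Complete t-partite graph K_{n_1,...,n_t}: parts indexed by 'I_t
   (standing for N_t = {1,...,t}); part i has n i vertices.
   A vertex is a dependent pair (i, k) with k : 'I_(n i). *)
Definition vtx (t : nat) (n : 'I_t -> nat) : finType := {i : 'I_t & 'I_(n i)}.

Definition adj t (n : 'I_t -> nat) (u v : vtx n) : bool := tag u != tag v.

Definition fsum t (n : 'I_t -> nat) (I : {set 'I_t}) : nat := \sum_(i in I) n i.

Definition pdom t (n : 'I_t -> nat) (p : nat) (S : {set vtx n}) : Prop :=
  forall v : vtx n, v \notin S -> p <= #|[set u in S | adj u v]|.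

Definition gamma_set t (n : 'I_t -> nat) (p : nat) (D : {set vtx n}) : Prop :=
  pdom p D /\ forall S : {set vtx n}, pdom p S -> #|D| <= #|S|.

Definition part t (n : 'I_t -> nat) (D : {set vtx n}) (i : 'I_t) : {set vtx n} :=
  [set v in D | tag v == i].

Definition IDset t (n : 'I_t -> nat) (D : {set vtx n}) : {set 'I_t} :=
  [set i | #|part D i| == n i].

Definition mu t (n : 'I_t -> nat) (D : {set vtx n}) : rat :=
  \sum_(i | i \notin IDset D)
    `| (#|part D i|)%:R - ((#|D|)%:R - (fsum n (IDset D))%:R) / (t - #|IDset D|)%:R |.

Definition optimal t (n : 'I_t -> nat) (p : nat) (D : {set vtx n}) : Prop :=
  [/\ gamma_set p D, #|IDset D| < t,
      fsum n (IDset D) < p,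
      (forall S, gamma_set (n:=n) p S -> #|IDset (n:=n) S| <= #|IDset D|)
    & (forall S, gamma_set (n:=n) p S -> IDset (n:=n) S = IDset D -> (mu D <= mu (n:=n) S)%R)].

From mathcomp Require Import all_boot all_order all_algebra zify lra.
Import Order.TTheory GRing.Theory Num.Theory.
Set Implicit Arguments. Unset Strict Implicit. Unset Printing Implicit Defensive.

(* Suppose two non-full parts of an optimal set D differ by at least 2, and let
   i0, j0 be non-full parts with |D_i0| maximal and |D_j0| minimal.  Moving one
   vertex of D from V_i0 to a missing vertex of V_j0 gives a set S of the same
   size, still p-dominating because a vertex is dominated by everything outside
   its own part.  V_i0 stays non-full, V_j0 cannot become full by maximality of
   |I_D|, so I_S = I_D and S has the same mean part size m over the non-full
   parts, with |D_j0| < m < |D_i0|.  Moving one unit from above the mean to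
   below it strictly decreases the total distance to the mean, so
   mu(S) < mu(D), contradicting optimality. *)

Section DistanceToMean.
Variable R : realFieldType.
Local Open Scope ring_scope.

Lemma norm_exchange_lt (a b m : R) :
  b + 2 <= a -> b < m < a ->
  `|a - 1 - m| + `|b + 1 - m| < `|a - m| + `|b - m|.
Proof.
move=> gap /andP[lt_bm lt_ma].
rewrite (gtr0_norm (x := a - m)) ?subr_gt0 // (ltr0_norm (x := b - m)) ?subr_lt0 //.
by case: (lerP 0 (a - 1 - m)) => [/ger0_norm|/ltr0_norm] ->;
   case: (lerP 0 (b + 1 - m)) => [/ger0_norm|/ltr0_norm] ->; lra.
Qed.

Lemma sum_dist_exchange_lt (I : finType) (P : pred I) (a b : I -> nat)
    (i j : I) (m : R) :
  P i -> P j -> (forall k, a k + (i == k) = b k + (j == k))%N ->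
  (b j + 2 <= b i)%N -> (b j)%:R < m < (b i)%:R ->
  \sum_(k | P k) `|(a k)%:R - m| < \sum_(k | P k) `|(b k)%:R - m|.
Proof.
move=> Pi Pj ab gap mean.
have ij : i != j by apply/eqP => eij; move: gap; rewrite eij; lia.
have ai : (a i)%:R = (b i)%:R - 1 :> R.
  by have := ab i; rewrite eqxx eq_sym (negbTE ij) addn0 addn1 => <-; rewrite -natr1 addrK.
have aj : (a j)%:R = (b j)%:R + 1 :> R.
  by have := ab j; rewrite eqxx (negbTE ij) addn0 addn1 => ->; rewrite natr1.
have Pj_neq_i : P j && (j != i) by rewrite Pj eq_sym.
rewrite (bigD1 i) // [X in _ < X](bigD1 i) //= (bigD1 j) //= [X in _ < _ + X](bigD1 j) //=.
rewrite (eq_bigr (fun k => `|(b k)%:R - m|)); last first.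
  move=> k /andP[/andP[_ ki] kj]; have := ab k.
  by rewrite eq_sym (negbTE ki) eq_sym (negbTE kj) !addn0 => ->.
rewrite !addrA ltrD2r ai aj; apply: norm_exchange_lt mean.
by rewrite -natrD ler_nat.
Qed.

Lemma mean_between (I : finType) (P : pred I) (x : I -> nat) (i j : I) :
  P i -> P j -> (forall k, P k -> x j <= x k <= x i)%N -> (x j < x i)%N ->
  ((x j)%:R : R) < (\sum_(k | P k) x k)%:R / (#|P|)%:R < ((x i)%:R : R).
Proof.
move=> Pi Pj bnd lt_ji.
have cardP : (0 < #|P|)%N by apply/card_gt0P; exists i.
have sum1P : (\sum_(k | P k) 1 = #|P|)%N by rewrite sum1_card.
have lo : (x j * #|P| < \sum_(k | P k) x k)%N.
  rewrite -sum1P big_distrr /= (bigD1 i) // [X in (_ < X)%N](bigD1 i) //=.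
  rewrite muln1 -addSn leq_add //; apply: leq_sum => k /andP[Pk _].
  by case/andP: (bnd k Pk).
have hi : (\sum_(k | P k) x k < x i * #|P|)%N.
  rewrite -sum1P big_distrr /= (bigD1 j) // [X in (_ < X)%N](bigD1 j) //=.
  rewrite muln1 -addSn leq_add //; apply: leq_sum => k /andP[Pk _].
  by case/andP: (bnd k Pk).
by rewrite ltr_pdivlMr ?ltr_pdivrMr ?ltr0n // -!natrM !ltr_nat lo hi.
Qed.

End DistanceToMean.

Section CompleteMultipartite.

Variables (t : nat) (n : 'I_t -> nat).
Implicit Types (A D S : {set vtx n}) (k : 'I_t) (u v w : vtx n).

Definition vclass k : {set vtx n} := [set v | tag v == k].

Lemma card_vclass k : #|vclass k| = n k.
Proof.
have -> : vclass k = [set Tagged (fun i => 'I_(n i)) x | x in 'I_(n k)].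
  apply/setP => v; rewrite inE; apply/eqP/imsetP => [|[x _ ->] //].
  by case: v => i x /= <-; exists x.
by rewrite card_imset ?card_ord //; apply: eq_from_Tagged.
Qed.

Lemma part_subset D k : part D k \subset D.
Proof. by apply/subsetP => v; rewrite inE => /andP[]. Qed.

Lemma part_vclass D k : part D k \subset vclass k.
Proof. by apply/subsetP => v; rewrite !inE => /andP[]. Qed.

Lemma card_part_le D k : #|part D k| <= n k.
Proof. by rewrite -card_vclass subset_leq_card ?part_vclass. Qed.

Lemma card_partition D : #|D| = \sum_k #|part D k|.
Proof.
rewrite -sum1_card (partition_big (fun v : vtx n => tag v) xpredT) //=.
by apply: eq_bigr => k _; rewrite -sum1_card; apply: eq_bigl => v; rewrite !inE.
Qed.

Lemma card_adj D v : #|[set u in D | adj u v]| = #|D| - #|part D (tag v)|.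
Proof.
have -> : [set u in D | adj u v] = D :\: part D (tag v).
  by apply/setP => u; rewrite !inE /adj; case: (u \in D); rewrite ?andbT.
by rewrite cardsD (setIidPr (part_subset _ _)).
Qed.

Lemma notin_IDsetP D k :
  reflect (exists2 w, tag w = k & w \notin D) (k \notin IDset D).
Proof.
rewrite inE -card_vclass; apply: (iffP idP) => [ne | [w tw wD]].
  have : part D k \proper vclass k.
    by rewrite properEcard part_vclass ltn_neqAle ne subset_leq_card ?part_vclass.
  by case/properP => _ [w]; rewrite !inE => /eqP tw /nandP[|/negP //]; exists w.
apply/eqP => /subset_cardP/(_ (part_vclass D k)) eqDk.
by move: (eqDk w); rewrite !inE tw eqxx (negbTE wD).
Qed.

Lemma pdomP p S :
  pdom p S <-> forall k, k \notin IDset S -> p <= #|S| - #|part S k|.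
Proof.
split=> [dom k /notin_IDsetP [w <- wS] | dom v vS].
  by rewrite -card_adj; apply: dom.
by rewrite card_adj; apply: dom; apply/notin_IDsetP; exists v.
Qed.

Lemma part_setU1 A w k :
  part (w |: A) k = if tag w == k then w |: part A k else part A k.
Proof.
apply/setP => v; case: eqP => [<-|ne]; rewrite !inE.
  by case: (eqVneq v w) => [->|]; rewrite ?eqxx ?andbT.
by case: (eqVneq v w) => [->|//]; rewrite (introF eqP ne) !andbF.
Qed.

Lemma part_setD1 A u k :
  part (A :\ u) k = if tag u == k then part A k :\ u else part A k.
Proof.
apply/setP => v; case: eqP => [<-|ne]; rewrite !inE ?andbA //.
by case: (eqVneq v u) => [->|//]; rewrite (introF eqP ne) !andbF.
Qed.

Section Exchange.

Variables (D : {set vtx n}) (u w : vtx n).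
Hypotheses (uD : u \in D) (wD : w \notin D) (tag_uw : tag u != tag w).

Let S := w |: (D :\ u).

Lemma card_exchange : #|S| = #|D|.
Proof.
rewrite cardsU1 (cardsD1 u D) uD !inE (negbTE wD) andbF /=; lia.
Qed.

Lemma card_part_exchange k :
  #|part S k| + (tag u == k) = #|part D k| + (tag w == k).
Proof.
rewrite part_setU1 part_setD1.
have uDk : (u \in part D k) = (tag u == k) by rewrite inE uD.
have wDk : w \notin part D k by rewrite inE (negbTE wD).
case: (eqVneq (tag w) k) => [twk|_]; case: (eqVneq (tag u) k) => [tuk|_] //.
- by move: tag_uw; rewrite tuk twk eqxx.
- by rewrite cardsU1 (negbTE wDk) addn0 addn1.
- by rewrite (cardsD1 u (part D k)) uDk tuk eqxx addn0 addnC.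
Qed.

Lemma pdom_exchange p :
  pdom p D -> tag u \notin IDset D ->
  #|part D (tag w)| < #|part D (tag u)| -> pdom p S.
Proof.
move=> /pdomP domD uI lt_wu; apply/pdomP => k kS.
have := domD _ uI; have := card_part_exchange k; rewrite card_exchange.
case: (eqVneq (tag u) k) => [<-|neu]; first lia.
case: (eqVneq (tag w) k) => [<-|new]; first lia.
rewrite !addn0 => eqSD _; rewrite eqSD; apply: domD.
by move: kS; rewrite !inE eqSD.
Qed.

Lemma IDset_exchange k :
  tag u \notin IDset D -> k != tag w -> (k \in IDset S) = (k \in IDset D).
Proof.
move=> uI nkw; have := card_part_exchange k.
rewrite (eq_sym (tag w)) (negbTE nkw) addn0 !inE.
case: (eqVneq (tag u) k) => [<- eqSD | _]; last by rewrite addn0 => ->.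
move: uI; rewrite inE; have := card_part_le D (tag u); lia.
Qed.

End Exchange.

Definition free_mean D : rat :=
  (((#|D|)%:R - (fsum n (IDset D))%:R) / (t - #|IDset D|)%:R)%R.

Lemma muE D :
  mu D = (\sum_(k | k \notin IDset D) `|(#|part D k|)%:R - free_mean D|)%R.
Proof. by []. Qed.

Lemma free_meanE D :
  free_mean D = ((\sum_(k | k \notin IDset D) #|part D k|)%:R
                 / (#|[pred k | k \notin IDset D]|)%:R)%R.
Proof.
have fsumE : fsum n (IDset D) = \sum_(k in IDset D) #|part D k|.
  by apply: eq_bigr => k; rewrite inE => /eqP.
have cardC : t - #|IDset D| = #|[pred k | k \notin IDset D]|.
  by rewrite -[t in t - _]card_ord -(cardC (IDset D)) addKn.
rewrite /free_mean (card_partition D) (bigID (mem (IDset D))) /= fsumE.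
by rewrite natrD addrC addKr cardC.
Qed.

End CompleteMultipartite.

Lemma optimal_exchange_contra t (n : 'I_t -> nat) p (D : {set vtx n}) u w :
  optimal p D -> u \in D -> w \notin D ->
  tag u \notin IDset D -> tag w \notin IDset D ->
  #|part D (tag w)| + 2 <= #|part D (tag u)| ->
  ((#|part D (tag w)|)%:R < free_mean D < (#|part D (tag u)|)%:R)%R -> False.
Proof.
case=> [[domD minD] _ _ maxI minmu] uD wD uI wI gap mean.
have tag_uw : tag u != tag w by apply/eqP => euw; move: gap; rewrite euw; lia.
set S := w |: (D :\ u).
have cardS : #|S| = #|D| by apply: card_exchange.
have gS : gamma_set p S.
  split=> [|S' /minD]; last by rewrite cardS.
  by apply: pdom_exchange => //; lia.
have IDsetS k : k != tag w -> (k \in IDset S) = (k \in IDset D).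
  exact: IDset_exchange.
have wS : tag w \notin IDset S.
  apply/negP => wS; have := maxI S gS.
  have -> : IDset S = tag w |: IDset D.
    apply/setP => k; rewrite in_setU1.
    by case: (eqVneq k (tag w)) => [->|/IDsetS ->]; rewrite ?wS.
  by rewrite cardsU1 wI ltnn.
have eqI : IDset S = IDset D.
  apply/setP => k; case: (eqVneq k (tag w)) => [->|/IDsetS //].
  by rewrite (negbTE wS) (negbTE wI).
have := minmu S gS eqI; apply/negP; rewrite -ltNge !muE eqI.
have -> : free_mean S = free_mean D by rewrite /free_mean eqI cardS.
exact: sum_dist_exchange_lt (card_part_exchange uD wD tag_uw) gap mean.
Qed.

Theorem lemma4 (t : nat) (n : 'I_t -> nat) (p : nat)
  (ht : 2 <= t) (hn : forall i, 0 < n i) (hp : 0 < p)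
  (hfp : p < fsum n [set: 'I_t])
  (D : {set vtx n}) (hD : optimal p D) :
  forall i j : 'I_t, i \notin IDset D -> j \notin IDset D ->
    (`| (#|part D i|)%:Z - (#|part D j|)%:Z | <= 1)%R.
Proof.
move=> i j iI jI; set d := fun k => #|part D k|.
have [i0 i0I max_i0] := @arg_maxnP _ i [pred k | k \notin IDset D] d iI.
have [j0 j0I min_j0] := @arg_minnP _ j [pred k | k \notin IDset D] d jI.
suff : d i0 <= d j0 + 1.
  by have := max_i0 _ iI; have := max_i0 _ jI; have := min_j0 _ iI;
     have := min_j0 _ jI; rewrite /d; lia.
rewrite leqNgt /d; apply/negP => gap.
have /set0Pn [u] : part D i0 != set0 by rewrite -card_gt0; lia.
rewrite inE => /andP[uD /eqP tag_u].
have /notin_IDsetP [w tag_w wD] := j0I.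
apply: (optimal_exchange_contra hD uD wD); rewrite ?tag_u ?tag_w //; first lia.
rewrite free_meanE; apply: mean_between => // [k kI|]; last lia.
by apply/andP; split; [exact: min_j0 | exact: max_i0].
Qed.
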